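(* Let $R$ be a ring with identity. Then $R$ is pseudopolar if and only if $R$ is both strongly $\pi$-rad clean and quasipolar.
   Context: $J(R)$ is the Jacobson radical and $U(R)$ the unit group of $R$. $\mathrm{comm}(a)=\{x\in R\mid xa=ax\}$, $\mathrm{comm}^2(a)=\{x\in R\mid xy=yx\text{ for all }y\in\mathrm{comm}(a)\}$; $R^{qnil}=\{a\in R\mid 1+ax\in U(R)\text{ for all }x\in\mathrm{comm}(a)\}$. An element $a$ is quasipolar if there is an idempotent $p\in\mathrm{comm}^2(a)$ with $a+p\in U(R)$ and $ap\in R^{qnil}$. An element $a$ is pseudopolar if there exist an idempotent $p\in\mathrm{comm}^2(a)$ and $k\in\mathbb{N}$ with $a+p\in U(R)$ and $a^kp\in J(R)$. An element $a$ is strongly $\pi$-rad clean if there is an idempotent $e\in R$ with $ae=ea$, $a-e\in U(R)$, and $a^ne\in J(R)$ for some $n\in\mathbb{N}$. The ring $R$ has one of these properties if every element does. *)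

From HB Require Import structures.
From mathcomp Require Import all_boot all_order all_algebra.
Set Implicit Arguments. Unset Strict Implicit. Unset Printing Implicit Defensive.
Import GRing.Theory.
Local Open Scope ring_scope.

Section Defs.
Variable R : pzRingType.

Definition in_U (a : R) : Prop := exists b : R, a * b = 1 /\ b * a = 1.

(* a ∈ J(R): standard elementwise description of the Jacobson radical,
   a ∈ J(R) iff 1 - x a is a unit for every x ∈ R. *)
Definition in_J (a : R) : Prop := forall x : R, in_U (1 - x * a).

Definition in_comm (a x : R) : Prop := x * a = a * x.

Definition in_comm2 (a x : R) : Prop :=
  forall y : R, in_comm a y -> x * y = y * x.

Definition in_qnil (a : R) : Prop :=
  forall x : R, in_comm a x -> in_U (1 + a * x).

Definition idempotent (p : R) : Prop := p * p = p.

Definition quasipolar (a : R) : Prop :=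
  exists p : R, [/\ idempotent p, in_comm2 a p, in_U (a + p) & in_qnil (a * p)].

(* ℕ = positive integers *)
Definition pseudopolar (a : R) : Prop :=
  exists (p : R) (k : nat),
    [/\ idempotent p, in_comm2 a p, in_U (a + p), (0 < k)%N & in_J (a ^+ k * p)].

Definition strongly_pi_rad_clean (a : R) : Prop :=
  exists (e : R) (n : nat),
    [/\ idempotent e, a * e = e * a, in_U (a - e), (0 < n)%N & in_J (a ^+ n * e)].

Definition quasipolar_ring : Prop := forall a : R, quasipolar a.
Definition pseudopolar_ring : Prop := forall a : R, pseudopolar a.
Definition strongly_pi_rad_clean_ring : Prop := forall a : R, strongly_pi_rad_clean a.

End Defs.

From Pilot Require Import Defs.
From HB Require Import structures.
From mathcomp Require Import all_boot all_order all_algebra.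
Import GRing.Theory.
Local Open Scope ring_scope.
Set Implicit Arguments. Unset Strict Implicit.

(* Three facts drive the argument.
   (1) If b^k lies in J(R) for some k > 0 then b is quasinilpotent: for x
       commuting with b, 1 - (-bx)^k = (1 + bx) * sum_{i<k} (-bx)^i, and the
       left-hand side is a unit since (-bx)^k = (-1)^k x^k b^k is a left
       multiple of b^k.
   (2) Spectral idempotents are unique: if p, e are commuting idempotents
       commuting with a, a + p and a + e are units and ap, ae are
       quasinilpotent, then p = e.  One shows p = pe (and symmetrically):
       f = p - pe is an idempotent with (ap)(a+e)^-1 f = f, so quasinilpotency
       of ap makes 1 - f a unit, forcing f = 0.
   (3) Replacing a by -a turns "a + p is a unit" into "a - p is a unit" and
       changes a^k p only by the unit sign (-1)^k.
   Then: a pseudopolar idempotent for -a makes a strongly pi-rad clean, and a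
   pseudopolar idempotent for a is quasipolar by (1).  Conversely, the
   strongly pi-rad clean idempotent of -a is, by (1) and (2), equal to the
   quasipolar idempotent of a, which therefore is pseudopolar. *)

Ltac comm_right := lazymatch goal with
 | |- GRing.comm _ (_ + _) => apply: commrD; comm_right
 | |- GRing.comm _ (- _) => apply: commrN; comm_right
 | |- GRing.comm _ (_ * _) => apply: commrM; comm_right
 | |- GRing.comm _ (_ ^+ _) => apply: commrX; comm_right
 | |- GRing.comm _ 1 => apply: commr1
 | |- GRing.comm _ 0 => apply: commr0
 | |- _ => first [exact: commr_refl | assumption | (apply: commr_sym; assumption)]
 end.
Ltac comm_tac := lazymatch goal with
 | |- GRing.comm _ (_ + _) => apply: commrD; comm_tac
 | |- GRing.comm _ (- _) => apply: commrN; comm_tac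
 | |- GRing.comm _ (_ * _) => apply: commrM; comm_tac
 | |- GRing.comm _ (_ ^+ _) => apply: commrX; comm_tac
 | |- GRing.comm _ 1 => apply: commr1
 | |- GRing.comm _ 0 => apply: commr0
 | |- _ => apply: commr_sym; comm_right
 end.

Section Units.
Variable R : pzRingType.
Implicit Types a f p u v x y : R.

Lemma in_U_lr u x y : x * u = 1 -> u * y = 1 -> in_U u.
Proof.
move=> xu uy; exists y; split => //.
suff -> : y = x by [].
by rewrite -[x]mulr1 -uy mulrA xu mul1r.
Qed.

Lemma inv_commr u v y :
  u * v = 1 -> v * u = 1 -> GRing.comm u y -> GRing.comm v y.
Proof.
move=> uv vu uy; rewrite /GRing.comm.
by rewrite -[v * y]mulr1 -uv mulrA -(mulrA v) -uy mulrA vu mul1r.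
Qed.

Lemma in_UN u : in_U u -> in_U (- u).
Proof. by case=> v [uv vu]; exists (- v); rewrite !mulrNN. Qed.

(* An idempotent f with 1 - f a unit vanishes, since f (1 - f) = 0. *)
Lemma idem_unit_eq0 f : Defs.idempotent f -> in_U (1 - f) -> f = 0.
Proof.
move=> ff [v [fv _]].
by rewrite -[f]mulr1 -fv mulrA mulrBr mulr1 ff subrr mul0r.
Qed.

Lemma in_J_mull x j : in_J j -> in_J (x * j).
Proof. by move=> Jj y; rewrite mulrA; apply: Jj. Qed.

Lemma in_J_exprN a q k : in_J ((- a) ^+ k * q) -> in_J (a ^+ k * q).
Proof.
move=> J; have := in_J_mull ((-1) ^+ k) J.
have sign2 : (-1) ^+ k * (-1) ^+ k = 1 :> R.
  by rewrite -exprD addnn -mul2n exprM sqrrN !expr1n.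
by rewrite [(- a) ^+ k]exprNn !mulrA sign2 mul1r.
Qed.

Lemma idem_expr p k : Defs.idempotent p -> (0 < k)%N -> p ^+ k = p.
Proof.
move=> pp; case: k => // n _; elim: n => [|n IH]; first by rewrite expr1.
by rewrite exprS IH pp.
Qed.

Lemma exprM_idem a p k :
  Defs.idempotent p -> GRing.comm a p -> (0 < k)%N -> (a * p) ^+ k = a ^+ k * p.
Proof. by move=> pp ap k0; rewrite exprMn_comm // (idem_expr pp k0). Qed.

Lemma comm2_comm a p : in_comm2 a p -> GRing.comm a p.
Proof. by move=> H; rewrite /GRing.comm -H. Qed.

End Units.

Section Quasinilpotent.
Variable R : pzRingType.
Implicit Types a b p e : R.

(* Fact (1): an element with a power in the Jacobson radical is
   quasinilpotent, via the geometric series for 1 - (-bx)^k. *)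
Lemma J_expr_qnil b k : (0 < k)%N -> in_J (b ^+ k) -> in_qnil b.
Proof.
move=> k0 J x xb.
have bx : GRing.comm b x by rewrite /GRing.comm xb.
pose c := - (b * x); pose S := \sum_(i < k) c ^+ i.
have U_geo : in_U (1 - c ^+ k).
  suff -> : c ^+ k = ((-1) ^+ k * x ^+ k) * b ^+ k by apply: J.
  rewrite /c exprNn exprMn_comm // -mulrA; congr (_ * _).
  by apply/commrX/commr_sym/commrX/commr_sym.
have geo : 1 - c ^+ k = (1 - c) * S by rewrite -opprB subrX1 -mulNr opprB.
have cS : GRing.comm c S by apply: commr_sum => i _; comm_tac.
have Sc : GRing.comm S (1 - c) by comm_tac.
have -> : 1 + b * x = 1 - c by rewrite /c opprK.
case: U_geo => t [h1 h2].
apply: (in_U_lr (x := t * S) (y := S * t)).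
  by rewrite -mulrA Sc -geo h2.
by rewrite mulrA -geo h1.
Qed.

Lemma qnil_idem_le a p e :
  Defs.idempotent p -> Defs.idempotent e -> GRing.comm p a -> GRing.comm e a ->
  GRing.comm p e -> in_U (a + e) -> in_qnil (a * p) -> p = p * e.
Proof.
move=> pp ee pa ea pe [v [h1 h2]] Q.
have va : GRing.comm v a by apply: (inv_commr h1 h2); comm_tac.
have vp : GRing.comm v p by apply: (inv_commr h1 h2); comm_tac.
have ve : GRing.comm v e by apply: (inv_commr h1 h2); comm_tac.
pose f := p - p * e.
have ef : e * f = 0 by rewrite mulrBr mulrA -pe -mulrA ee subrr.
have pf : p * f = f by rewrite mulrBr mulrA pp.
have fp : f * p = f by rewrite mulrBl pp -mulrA -pe mulrA pp.
have ff : Defs.idempotent f.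
  have fe : f * e = 0 by rewrite mulrBl -mulrA ee subrr.
  by rewrite /Defs.idempotent {2}/f mulrBr fp mulrA fp fe subr0.
have av : a * v = 1 - e * v by rewrite -h1 mulrDl addrK.
have fixed : a * p * (v * f) = f.
  rewrite -mulrA (mulrA p v) -vp -mulrA pf mulrA av mulrBl mul1r.
  by rewrite -ve -mulrA ef mulr0 subr0.
have apx : GRing.comm (a * p) (- (v * f)) by rewrite /f; comm_tac.
have := Q _ (esym apx); rewrite mulrN fixed => /(idem_unit_eq0 ff) /eqP.
by rewrite subr_eq0 => /eqP.
Qed.

Lemma qnil_idem_unique a p e :
  Defs.idempotent p -> Defs.idempotent e -> GRing.comm p a -> GRing.comm e a ->
  GRing.comm p e -> in_U (a + p) -> in_U (a + e) ->
  in_qnil (a * p) -> in_qnil (a * e) -> p = e.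
Proof.
move=> pp ee pa ea pe Up Ue Qp Qe.
rewrite (qnil_idem_le pp ee pa ea pe Ue Qp) pe.
by rewrite -(qnil_idem_le ee pp ea pa (commr_sym pe) Up Qe).
Qed.

End Quasinilpotent.

Section Elementwise.
Variable R : pzRingType.
Implicit Types a : R.

Lemma pseudopolar_quasipolar a : pseudopolar a -> quasipolar a.
Proof.
case=> p [k [pp ap U k0 J]]; exists p; split => //.
by apply: (J_expr_qnil k0); rewrite exprM_idem //; apply: comm2_comm.
Qed.

Lemma pseudopolar_opp_spirc a : pseudopolar (- a) -> strongly_pi_rad_clean a.
Proof.
case=> p [k [pp ap U k0 J]]; exists p, k; split => //.
- by have := comm2_comm ap; rewrite /GRing.comm mulrN mulNr => /oppr_inj.
- by rewrite -[a - p]opprK opprB addrC; apply: in_UN.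
- exact: in_J_exprN.
Qed.

(* The strongly pi-rad clean idempotent of -a coincides with the quasipolar
   idempotent of a, which is therefore pseudopolar. *)
Lemma spirc_opp_quasipolar a :
  strongly_pi_rad_clean (- a) -> quasipolar a -> pseudopolar a.
Proof.
case=> e [n [ee ae Ue n0 J]] [p [pp ap Up Qp]].
have ea : GRing.comm e a.
  by move: ae; rewrite /GRing.comm mulrN mulNr => /oppr_inj.
have pa : GRing.comm p a := commr_sym (comm2_comm ap).
have pe : GRing.comm p e := ap e ea.
have Ue' : in_U (a + e) by rewrite -[a + e]opprK opprD; apply: in_UN.
have Jn : in_J (a ^+ n * e) := in_J_exprN J.
have Qe : in_qnil (a * e).
  by apply: (J_expr_qnil n0); rewrite exprM_idem // commr_sym.
have p_eq_e : p = e := qnil_idem_unique pp ee pa ea pe Up Ue' Qp Qe.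
by exists p, n; split => //; rewrite p_eq_e.
Qed.

End Elementwise.

Theorem theorem4p4 (R : pzRingType) :
  pseudopolar_ring R <-> strongly_pi_rad_clean_ring R /\ quasipolar_ring R.
Proof.
split.
- move=> pseudo; split=> a.
  + by apply: pseudopolar_opp_spirc; apply: pseudo.
  + exact: pseudopolar_quasipolar.
- by case=> spirc quasi a; apply: spirc_opp_quasipolar.
Qed.
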